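(* Let $C,\beta>0$ and $N,M\in\mathbb{N}$. Let $H$ be a Hilbert space of dimension $M$, and let $(x_j)_{j=1}^N$ and $(f_j)_{j=1}^N$ be sequences in $H$ satisfying $\|x_j\|=\|f_j\|$ for all $1\leq j\leq N$ and $$\Big\|\sum_{j=1}^N \varepsilon_j\langle x, f_j\rangle x_j\Big\|\leq C\|x\| \qquad\text{for all } x\in H \text{ and all scalars } \varepsilon_j \text{ with } |\varepsilon_j|=1.$$ If the frame operator of $(f_j)_{j=1}^N$ has eigenvalues $\lambda_1\geq\dots\geq\lambda_M$ satisfying $\lambda_1\leq \frac{\beta}{M}\sum_{j=1}^M\lambda_j$, then $(f_j)_{j=1}^N$ has Bessel bound $\frac{27}{4}K_1^{-4}\beta^2 C$. In particular, if $(f_j)_{j=1}^N$ is a frame with condition number $\beta$ then $(f_j)_{j=1}^N$ has Bessel bound $\frac{27}{4}K_1^{-4}\beta^2 C$, and if $(f_j)_{j=1}^N$ is a tight frame then $(f_j)_{j=1}^N$ has Bessel bound $\frac{27}{4}K_1^{-4}C$. Likewise, if the frame operator of $(x_j)_{j=1}^N$ has eigenvalues $\lambda_1\geq\dots\geq\lambda_M$ satisfying $\lambda_1\leq\frac{\beta}{M}\sum_{j=1}^M\lambda_j$, then $(x_j)_{j=1}^N$ has Bessel bound $\frac{27}{4}K_1^{-4}\beta^2 C$.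
   Context: A sequence $(y_j)_{j=1}^N$ in a Hilbert space $H$ has Bessel bound $B$ if $\sum_{j=1}^N|\langle x,y_j\rangle|^2\leq B\|x\|^2$ for all $x\in H$; it is a frame if additionally there is $A>0$ with $A\|x\|^2\leq\sum_j|\langle x,y_j\rangle|^2$ for all $x$; the condition number is the ratio $B/A$ of optimal bounds, and the frame is tight if the condition number is $1$. The frame operator of $(y_j)$ is $S(x)=\sum_{j}\langle x,y_j\rangle y_j$. $K_1>0$ denotes the constant in Khintchine's inequality: for all $N\in\mathbb{N}$ and all scalars $(a_j)_{j=1}^N$, $2^{-N}\sum_{\delta_j=\pm1}\big|\sum_{j=1}^N\delta_j a_j\big|\geq K_1\big(\sum_{j=1}^N|a_j|^2\big)^{1/2}$. *)

(* Scalars: a numClosedFieldType K (e.g. algC, complex R).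
   A boolean [rs] selects real scalars (entries in Num.real) or complex scalars (all of K). *)
From HB Require Import structures.
From mathcomp Require Import all_boot all_order all_algebra.
Set Implicit Arguments. Unset Strict Implicit. Unset Printing Implicit Defensive.
Import Order.TTheory GRing.Theory Num.Theory.
Local Open Scope ring_scope.

Section Defs.
Variable K : numClosedFieldType.

Definition is_scalar (rs : bool) (z : K) : bool := if rs then z \is Num.real else true.

(* the M-dimensional Hilbert space: row vectors with scalar entries *)
Definition inH (rs : bool) (M : nat) (v : 'rV[K]_M) : Prop := forall i, is_scalar rs (v 0 i).

Definition dotp (M : nat) (u v : 'rV[K]_M) : K := \sum_(i < M) u 0 i * (v 0 i)^*.
Definition hnorm (M : nat) (v : 'rV[K]_M) : K := sqrtC (dotp v v).

(* frame operator S x = sum_j <x, y_j> y_j, and its matrix (x *m S = S x) *)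
Definition frame_op (M N : nat) (y : 'I_N -> 'rV[K]_M) (x : 'rV[K]_M) : 'rV[K]_M :=
  \sum_(j < N) dotp x (y j) *: y j.
Definition frame_mx (M N : nat) (y : 'I_N -> 'rV[K]_M) : 'M[K]_M :=
  \matrix_(i, k) (frame_op y (delta_mx 0 i)) 0 k.

Definition eigenvalues_desc (M : nat) (S : 'M[K]_M) (lam : nat -> K) : Prop :=
  char_poly S = \prod_(i < M) ('X - (lam i)%:P) /\
  (forall i j, (i <= j < M)%N -> lam j <= lam i).

Definition bessel_bound (rs : bool) (M N : nat) (y : 'I_N -> 'rV[K]_M) (B : K) : Prop :=
  forall x, inH rs x -> \sum_(j < N) `|dotp x (y j)| ^+ 2 <= B * hnorm x ^+ 2.

Definition lower_frame_bound (rs : bool) (M N : nat) (y : 'I_N -> 'rV[K]_M) (A : K) : Prop :=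
  forall x, inH rs x -> A * hnorm x ^+ 2 <= \sum_(j < N) `|dotp x (y j)| ^+ 2.

Definition condition_number (rs : bool) (M N : nat) (y : 'I_N -> 'rV[K]_M) (kappa : K) : Prop :=
  exists A B : K, 0 < A /\ lower_frame_bound rs y A /\
     (forall A', lower_frame_bound rs y A' -> A' <= A) /\
     bessel_bound rs y B /\ (forall B', bessel_bound rs y B' -> B <= B') /\
     kappa = B / A.

Definition tight_frame (rs : bool) (M N : nat) (y : 'I_N -> 'rV[K]_M) : Prop :=
  condition_number rs y 1.

Definition khintchine_const (rs : bool) (K1 : K) : Prop :=
  forall (n : nat) (a : 'I_n -> K), (forall j, is_scalar rs (a j)) ->
    K1 * sqrtC (\sum_(j < n) `|a j| ^+ 2) <=
    (2 ^+ n)^-1 * \sum_(d : {ffun 'I_n -> bool})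
        `|\sum_(j < n) (if d j then 1 else -1) * a j|.

End Defs.

From HB Require Import structures.
From mathcomp Require Import all_boot all_order all_algebra ring.
Import Order.TTheory GRing.Theory Num.Theory.
Local Open Scope ring_scope.
Local Open Scope sesquilinear_scope.
Set Implicit Arguments. Unset Strict Implicit. Unset Printing Implicit Defensive.

(* Testing the unconditional estimate on sign vectors u, w in {-1,1}^M, with the
   unimodular eps_j chosen to align phases, gives sum_j |<u,f_j>| |<x_j,w>| <= C M.
   Averaging over all u and w and applying Khintchine's inequality to each factor
   yields K1^2 sum_j ||f_j||^2 <= C M: the trace of the frame operator of f (and of x,
   as ||x_j|| = ||f_j||) is at most C M / K1^2.  The optimal Bessel bound is the top
   eigenvalue lam_0, which the hypothesis bounds by beta/M times the trace, hence by
   beta C / K1^2; for a frame with bounds A <= B one uses A M <= trace instead.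
   Since K1 <= 1 and beta >= 1 (unless lam_0 <= 0), beta C / K1^2 is below
   27/4 K1^-4 beta^2 C. *)

Section FrameBesselBounds.
Variable K : numClosedFieldType.

Lemma dotpE M (u v : 'rV[K]_M) : dotp u v = dotmx u v.
Proof. by rewrite dotmxE /dotp !mxE; apply: eq_bigr => i _; rewrite !mxE. Qed.

Lemma dotp_ge0 M (u : 'rV[K]_M) : 0 <= dotp u u.
Proof. by rewrite dotpE dnorm_ge0. Qed.

Lemma hnorm_ge0 M (u : 'rV[K]_M) : 0 <= hnorm u.
Proof. by rewrite sqrtC_ge0 dotp_ge0. Qed.

Lemma hnorm_sqr M (u : 'rV[K]_M) : hnorm u ^+ 2 = dotp u u.
Proof. exact: sqrtCK. Qed.

Lemma normr_dotp_le M (u v : 'rV[K]_M) : `|dotp u v| <= hnorm u * hnorm v.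
Proof. by rewrite /hnorm !dotpE; exact: (CauchySchwarz_sqrt (@dotmx K M) u v).1. Qed.

Lemma dotpC M (u v : 'rV[K]_M) : dotp v u = (dotp u v)^*.
Proof.
by rewrite /dotp rmorph_sum; apply: eq_bigr => i _; rewrite rmorphM /= conjCK mulrC.
Qed.

Lemma dotp_real M (u v : 'rV[K]_M) : inH true u -> inH true v -> dotp u v \is Num.real.
Proof.
move=> hu hv; apply: rpred_sum => i _.
by have := hv i; rewrite /is_scalar => vr; rewrite rpredM ?conj_Creal //; apply: hu.
Qed.

Lemma dotp_suml M (I : finType) (a : I -> K) (y : I -> 'rV[K]_M) w :
  dotp (\sum_j a j *: y j) w = \sum_j a j * dotp (y j) w.
Proof.
rewrite /dotp; under eq_bigr => i _ do rewrite summxE mulr_suml.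
rewrite exchange_big; apply: eq_bigr => j _; rewrite mulr_sumr.
by apply: eq_bigr => i _; rewrite mxE mulrA.
Qed.

Lemma dotp_delta M (i : 'I_M) (u : 'rV[K]_M) : dotp (delta_mx 0 i) u = (u 0 i)^*.
Proof.
rewrite /dotp (bigD1 i) //= big1 => [|l nl]; first by rewrite !mxE !eqxx mul1r addr0.
by rewrite !mxE (negbTE nl) andbF mul0r.
Qed.

Lemma delta_inH rs M (i : 'I_M) : inH rs (delta_mx 0 i : 'rV[K]_M).
Proof. by move=> k; rewrite /is_scalar; case: rs => //; rewrite mxE realn. Qed.

Lemma hnorm_delta M (i : 'I_M) : hnorm (delta_mx 0 i : 'rV[K]_M) = 1.
Proof. by rewrite /hnorm dotp_delta mxE !eqxx rmorph1 sqrtC1. Qed.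

Definition phase (z : K) : K := if z == 0 then 1 else z^* / `|z|.

Lemma phaseM (z : K) : phase z * z = `|z|.
Proof.
rewrite /phase; case: eqP => [->|/eqP nz]; first by rewrite mulr0 normr0.
by rewrite mulrAC [_^* * _]mulrC -normCK expr2 mulfK // normr_eq0.
Qed.

Lemma normr_phase (z : K) : `|phase z| = 1.
Proof.
rewrite /phase; case: eqP => [_|/eqP nz]; first by rewrite normr1.
by rewrite normrM normfV norm_conjC normr_id mulfV // normr_eq0.
Qed.

Lemma phase_scalar rs (z : K) : is_scalar rs z -> is_scalar rs (phase z).
Proof.
rewrite /is_scalar /phase; case: rs => // zr; case: eqP => _; first exact: rpred1.
by rewrite conj_Creal // rpredM // ?rpredV normr_real.
Qed.

Definition unconditional_bound rs (C : K) N M (x f : 'I_N -> 'rV[K]_M) : Prop :=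
  forall (v : 'rV[K]_M) (eps : 'I_N -> K), inH rs v ->
    (forall j, is_scalar rs (eps j) /\ `|eps j| = 1) ->
    hnorm (\sum_(j < N) (eps j * dotp v (f j)) *: x j) <= C * hnorm v.

Lemma sum_normr_dotp_le rs (C : K) N M (x f : 'I_N -> 'rV[K]_M) v w :
  (forall j, inH rs (x j)) -> (forall j, inH rs (f j)) ->
  unconditional_bound rs C x f -> inH rs v -> inH rs w ->
  \sum_j `|dotp v (f j)| * `|dotp (x j) w| <= C * hnorm v * hnorm w.
Proof.
move=> x_inH f_inH uncond v_inH w_inH.
pose z j := dotp v (f j) * dotp (x j) w.
have z_scalar j : is_scalar rs (z j).
  rewrite /is_scalar; case: rs x_inH f_inH v_inH w_inH {uncond} => // *.
  by rewrite rpredM // dotp_real.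
have phase_ok j : is_scalar rs (phase (z j)) /\ `|phase (z j)| = 1.
  by rewrite phase_scalar ?normr_phase.
have := uncond v (fun j => phase (z j)) v_inH phase_ok.
set T := \sum_j _ => hT.
have dotpT : dotp T w = \sum_j `|z j|.
  by rewrite dotp_suml; apply: eq_bigr => j _; rewrite -mulrA phaseM.
have : `|dotp T w| <= C * hnorm v * hnorm w.
  by apply: le_trans (normr_dotp_le T w) _; apply: ler_wpM2r; [exact: hnorm_ge0 | exact: hT].
rewrite dotpT ger0_norm ?sumr_ge0 //.
by under eq_bigr => j _ do rewrite /z normrM.
Qed.

Definition sign_vec M (d : {ffun 'I_M -> bool}) : 'rV[K]_M :=
  \row_i (if d i then 1 else -1).

Lemma sign_vec_inH rs M (d : {ffun 'I_M -> bool}) : inH rs (sign_vec d).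
Proof.
by move=> i; rewrite /is_scalar mxE; case: rs => //; case: (d i); rewrite ?rpredN rpred1.
Qed.

Lemma conj_sign_vec M (d : {ffun 'I_M -> bool}) i : ((sign_vec d) 0 i)^* = sign_vec d 0 i.
Proof. by rewrite mxE; case: (d i); rewrite ?rmorphN rmorph1. Qed.

Lemma hnorm_sign_vec M (d : {ffun 'I_M -> bool}) : hnorm (sign_vec d) = sqrtC M%:R.
Proof.
rewrite /hnorm /dotp (eq_bigr (fun _ => 1)) ?sumr_const ?card_ord // => i _.
by rewrite conj_sign_vec mxE; case: (d i); rewrite ?mulrNN mulr1.
Qed.

Lemma khintchine_sign_vec rs (K1 : K) M (a : 'rV[K]_M) :
  khintchine_const rs K1 -> inH rs a ->
  2 ^+ M * K1 * hnorm a <= \sum_(d : {ffun 'I_M -> bool}) `|dotp a (sign_vec d)|.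
Proof.
move=> khin a_inH; have := khin M (fun i => a 0 i) a_inH.
have -> : \sum_(j < M) `|a 0 j| ^+ 2 = dotp a a.
  by apply: eq_bigr => j _; rewrite normCK.
have -> : \sum_(d : {ffun 'I_M -> bool}) `|\sum_(j < M) (if d j then 1 else -1) * a 0 j|
          = \sum_(d : {ffun 'I_M -> bool}) `|dotp a (sign_vec d)|.
  apply: eq_bigr => d _; congr `|_|; apply: eq_bigr => i _.
  by rewrite conj_sign_vec mxE mulrC.
by move=> avg_ge; rewrite -mulrA -ler_pdivlMl ?exprn_gt0.
Qed.

Lemma frame_trace_le rs (K1 C : K) N M (x f : 'I_N -> 'rV[K]_M) :
  0 < K1 -> khintchine_const rs K1 ->
  (forall j, inH rs (x j)) -> (forall j, inH rs (f j)) ->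
  (forall j, hnorm (x j) = hnorm (f j)) -> unconditional_bound rs C x f ->
  K1 ^+ 2 * \sum_j dotp (f j) (f j) <= C * M%:R.
Proof.
move=> K1_gt0 khin x_inH f_inH hnorm_xf uncond.
pose signs := {ffun 'I_M -> bool}.
pose c : K := 2 ^+ M.
have c_gt0 : 0 < c by rewrite exprn_gt0.
pose a j := \sum_(d : signs) `|dotp (sign_vec d) (f j)|.
pose b j := \sum_(d : signs) `|dotp (x j) (sign_vec d)|.
have sum_ab : \sum_j a j * b j <= c * c * (C * M%:R).
  have -> : \sum_j a j * b j = \sum_(d : signs) \sum_(d' : signs)
      \sum_j `|dotp (sign_vec d) (f j)| * `|dotp (x j) (sign_vec d')|.
    under eq_bigr => j _ do rewrite /a /b mulr_suml; rewrite exchange_big.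
    apply: eq_bigr => d _; under eq_bigr => j _ do rewrite mulr_sumr.
    by rewrite exchange_big.
  have -> : c * c * (C * M%:R) = \sum_(d : signs) \sum_(d' : signs) C * M%:R.
    by rewrite !sumr_const -mulrnA card_ffun card_bool card_ord -[RHS]mulr_natl natrM natrX.
  apply: ler_sum => d _; apply: ler_sum => d' _.
  apply: le_trans (sum_normr_dotp_le x_inH f_inH uncond (sign_vec_inH _ _) (sign_vec_inH _ _)) _.
  by rewrite !hnorm_sign_vec -mulrA -expr2 sqrtCK.
have ab_ge j : c * c * (K1 ^+ 2 * dotp (f j) (f j)) <= a j * b j.
  have -> : c * c * (K1 ^+ 2 * dotp (f j) (f j)) =
      (c * K1 * hnorm (f j)) * (c * K1 * hnorm (x j)) by rewrite hnorm_xf -hnorm_sqr; ring.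
  have cK1_ge0 : 0 <= c * K1 := mulr_ge0 (ltW c_gt0) (ltW K1_gt0).
  apply: ler_pM; rewrite ?(mulr_ge0 cK1_ge0 (hnorm_ge0 _)) //.
  - rewrite /a; under eq_bigr => d _ do rewrite dotpC norm_conjC.
    exact: khintchine_sign_vec khin (f_inH j).
  - exact: khintchine_sign_vec khin (x_inH j).
rewrite -(ler_pM2l (mulr_gt0 c_gt0 c_gt0)) !mulr_sumr; apply: le_trans sum_ab.
exact: ler_sum.
Qed.

Lemma dotp_mx M (u v : 'rV[K]_M) : dotp u v = (u *m v ^t*) 0 0.
Proof. by rewrite dotpE dotmxE. Qed.

Lemma frame_mxE N M (y : 'I_N -> 'rV[K]_M) i k :
  frame_mx y i k = \sum_j (y j 0 i)^* * y j 0 k.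
Proof. by rewrite mxE summxE; apply: eq_bigr => j _; rewrite mxE dotp_delta. Qed.

Lemma mul_frame_mx N M (y : 'I_N -> 'rV[K]_M) v : v *m frame_mx y = frame_op y v.
Proof.
apply/rowP => k; rewrite !mxE summxE.
under eq_bigr => i _ do rewrite frame_mxE mulr_sumr.
rewrite exchange_big; apply: eq_bigr => j _.
by rewrite mxE /dotp mulr_suml; apply: eq_bigr => i _; rewrite mulrA.
Qed.

Lemma frame_mx_trace N M (y : 'I_N -> 'rV[K]_M) :
  \tr (frame_mx y) = \sum_j dotp (y j) (y j).
Proof.
rewrite /mxtrace; under eq_bigr => i _ do rewrite frame_mxE.
by rewrite exchange_big; apply: eq_bigr => j _; apply: eq_bigr => i _; rewrite mulrC.
Qed.

Lemma frame_mx_adj N M (y : 'I_N -> 'rV[K]_M) : (frame_mx y) ^t* = frame_mx y.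
Proof.
apply/matrixP => i k; rewrite mxE [_^T _ _]mxE !frame_mxE rmorph_sum; apply: eq_bigr => j _.
by rewrite rmorphM /= conjCK mulrC.
Qed.

Lemma frame_mx_form N M (y : 'I_N -> 'rV[K]_M) v :
  \sum_j `|dotp v (y j)| ^+ 2 = dotp (v *m frame_mx y) v.
Proof.
rewrite mul_frame_mx dotp_suml; apply: eq_bigr => j _.
by rewrite normCK -dotpC.
Qed.

Lemma eigenvalues_desc_char_poly M (S : 'M[K]_M) lam : eigenvalues_desc S lam ->
  char_poly S = \prod_(z <- map lam (iota 0 M)) ('X - z%:P).
Proof.
by move=> [-> _]; rewrite big_map -(big_mkord xpredT (fun i => 'X - (lam i)%:P)) /index_iota subn0.
Qed.

Lemma eigenvalues_desc_sum M (S : 'M[K]_M) lam : (0 < M)%N -> eigenvalues_desc S lam ->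
  \sum_(i < M) lam i = \tr S.
Proof.
move=> M_gt0 hlam; apply/eqP; rewrite -eqr_opp -char_poly_trace //.
have := @coefPn_prod_XsubC _ (map lam (iota 0 M)).
rewrite size_map size_iota -lt0n -(eigenvalues_desc_char_poly hlam) => /(_ M_gt0) ->.
by rewrite big_map -(big_mkord xpredT lam) /index_iota subn0.
Qed.

Lemma eigenvalue_le_desc M (S : 'M[K]_M) lam a : eigenvalues_desc S lam ->
  eigenvalue S a -> a <= lam 0%N.
Proof.
move=> hlam; rewrite eigenvalue_root_char (eigenvalues_desc_char_poly hlam).
rewrite root_prod_XsubC => /mapP [k]; rewrite mem_iota add0n => /andP[_ kM] ->.
by case: hlam => _; apply; rewrite kM.
Qed.

Lemma normalmx_form_le M (S : 'M[K]_M) (m : K) v : S \is normalmx ->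
  (forall a, eigenvalue S a -> a <= m) -> dotp (v *m S) v <= m * dotp v v.
Proof.
move=> /orthomx_spectralP S_diag eig_le.
set P := spectralmx S in S_diag; set d := spectral_diag S in S_diag.
have P_unitary : P \is unitarymx := spectral_unitarymx S.
have P_inv : invmx P = P^t* := invmx_unitary P_unitary.
have PtP : P^t* *m P = 1%:M by rewrite -P_inv mulVmx // spectral_unit.
have PPt : P *m P^t* = 1%:M by apply/unitarymxP.
have d_le i : d 0 i <= m.
  apply: eig_le; apply/eigenvalueP; exists (row i P).
    rewrite -row_mul S_diag P_inv !mulmxA PPt mul1mx mul_diag_mx.
    by apply/rowP => k; rewrite !mxE.
  apply/eqP => rowP0.
  have : row i (P *m P^t*) = row i 1%:M by rewrite PPt.
  rewrite row_mul rowP0 mul0mx => /rowP /(_ i); rewrite !mxE eqxx /= => /eqP.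
  by rewrite eq_sym oner_eq0.
rewrite !dotp_mx; set z := v *m P^t*.
have zt : z ^t* = P *m v ^t* by rewrite /z trmx_mul map_mxM trmxCK.
have -> : v *m S *m v ^t* = z *m diag_mx d *m z ^t*.
  by rewrite zt S_diag P_inv /z !mulmxA.
have -> : v *m v ^t* = z *m z ^t*.
  by rewrite zt /z -mulmxA (mulmxA (P^t*) P) PtP mul1mx.
rewrite mul_mx_diag !mxE mulr_sumr; apply: ler_sum => i _.
rewrite !mxE mulrAC [m * _]mulrC; apply: ler_wpM2l; [exact: mul_conjC_ge0 | exact: d_le].
Qed.

Lemma frame_form_le N M (y : 'I_N -> 'rV[K]_M) lam v :
  eigenvalues_desc (frame_mx y) lam ->
  \sum_j `|dotp v (y j)| ^+ 2 <= lam 0%N * dotp v v.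
Proof.
move=> hlam; rewrite frame_mx_form; apply: normalmx_form_le.
  by apply/normalmxP; rewrite frame_mx_adj.
by move=> a; apply: eigenvalue_le_desc.
Qed.

Lemma khintchine_const_le1 rs (K1 : K) : khintchine_const rs K1 -> K1 <= 1.
Proof.
move=> khin; have one_scalar (j : 'I_1) : is_scalar rs (1 : K) by rewrite /is_scalar; case: (rs).
have := khin 1%N (fun _ => 1) one_scalar.
rewrite big_ord1 normr1 expr1n sqrtC1 mulr1 (eq_bigr (fun _ => 1)) => [|d _].
  by rewrite sumr_const card_ffun card_bool card_ord expn1 expr1 mulVf // pnatr_eq0.
by rewrite big_ord1 mulr1; case: (d _); rewrite ?normrN normr1.
Qed.

Lemma khintchine_bound_ge (K1 C kappa : K) : 0 < K1 -> K1 <= 1 -> 0 < C -> 1 <= kappa ->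
  kappa * (C / K1 ^+ 2) <= 27 / 4 * K1 ^- 4 * kappa ^+ 2 * C.
Proof.
move=> K1_gt0 K1_le1 C_gt0 kappa_ge1.
have kappa_gt0 : 0 < kappa := lt_le_trans ltr01 kappa_ge1.
have K1sq_gt0 : 0 < K1 ^+ 2 by rewrite exprn_gt0.
have -> : 27 / 4 * K1 ^- 4 * kappa ^+ 2 * C =
    kappa * (C / K1 ^+ 2) * (27 / 4 * kappa / K1 ^+ 2) by field; rewrite gt_eqF.
have lhs_ge0 : 0 <= kappa * (C / K1 ^+ 2).
  exact: mulr_ge0 (ltW kappa_gt0) (divr_ge0 (ltW C_gt0) (ltW K1sq_gt0)).
rewrite ler_peMr // ler_pdivlMr // mul1r.
apply: le_trans (exprn_ile1 _ (ltW K1_gt0) K1_le1) (le_trans kappa_ge1 _).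
by rewrite ler_peMl ?(ltW kappa_gt0) // ler_pdivlMr ?ltr0n // mul1r ler_nat.
Qed.

Lemma bessel_bound_dim0 rs N (y : 'I_N -> 'rV[K]_0) B : bessel_bound rs y B.
Proof.
move=> v _; rewrite /hnorm /dotp big_ord0 sqrtC0 expr0n mulr0.
by rewrite big1 // => j _; rewrite big_ord0 normr0 expr0n.
Qed.

Lemma bessel_bound_of_eigenvalues rs (K1 C beta : K) N M (y : 'I_N -> 'rV[K]_M) lam :
  (0 < M)%N -> 0 < K1 -> K1 <= 1 -> 0 < C -> 0 < beta ->
  K1 ^+ 2 * \sum_j dotp (y j) (y j) <= C * M%:R ->
  eigenvalues_desc (frame_mx y) lam -> lam 0%N <= beta / M%:R * \sum_(i < M) lam i ->
  bessel_bound rs y (27 / 4 * K1 ^- 4 * beta ^+ 2 * C).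
Proof.
move=> M_gt0 K1_gt0 K1_le1 C_gt0 beta_gt0 trace_le hlam lam0_le v _.
apply: le_trans (frame_form_le v hlam) _; rewrite hnorm_sqr.
apply: ler_wpM2r; first exact: dotp_ge0.
have M_pos : (0 : K) < M%:R by rewrite ltr0n.
have K1sq_gt0 : 0 < K1 ^+ 2 by rewrite exprn_gt0.
have bound_gt0 : 0 < 27 / 4 * K1 ^- 4 * beta ^+ 2 * C.
  by rewrite !mulr_gt0 ?invr_gt0 ?exprn_gt0.
set t := \sum_(i < M) lam i in lam0_le.
have t_trace : t = \sum_j dotp (y j) (y j).
  by rewrite /t (eigenvalues_desc_sum M_gt0 hlam) frame_mx_trace.
have t_le : t <= M%:R * lam 0%N.
  rewrite mulr_natl -[in X in _ <= X](card_ord M) -sumr_const.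
  by apply: ler_sum => i _; case: hlam => _ desc; apply: desc; rewrite ltn_ord.
have [beta_ge1|beta_lt1] := real_leP (@real1 K) (gtr0_real beta_gt0).
  apply: le_trans lam0_le (le_trans _ (khintchine_bound_ge K1_gt0 K1_le1 C_gt0 beta_ge1)).
  rewrite mulrAC -mulrA; apply: ler_wpM2l; first exact: ltW.
  by rewrite ler_pdivrMr // mulrAC ler_pdivlMr // t_trace mulrC.
suff : lam 0%N <= 0 by move/le_trans; apply; exact: ltW.
have : (1 - beta) * lam 0%N <= 0.
  rewrite mulrBl mul1r subr_le0; apply: le_trans lam0_le _.
  rewrite mulrAC -mulrA; apply: ler_wpM2l; first exact: ltW.
  by rewrite ler_pdivrMr // mulrC.
by rewrite pmulr_rle0 // subr_gt0.
Qed.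

Lemma bessel_bound_of_condition_number rs (K1 C kappa : K) N M (y : 'I_N -> 'rV[K]_M) :
  (0 < M)%N -> 0 < K1 -> K1 <= 1 -> 0 < C ->
  K1 ^+ 2 * \sum_j dotp (y j) (y j) <= C * M%:R ->
  condition_number rs y kappa -> bessel_bound rs y (27 / 4 * K1 ^- 4 * kappa ^+ 2 * C).
Proof.
move=> M_gt0 K1_gt0 K1_le1 C_gt0 trace_le [A [B [A_gt0 [lowerA [_ [besselB [_ ->]]]]]]].
have M_pos : (0 : K) < M%:R by rewrite ltr0n.
have K1sq_gt0 : 0 < K1 ^+ 2 by rewrite exprn_gt0.
have lowerA_delta i : A <= \sum_j `|dotp (delta_mx 0 i) (y j)| ^+ 2.
  by have := lowerA _ (delta_inH rs i); rewrite hnorm_delta expr1n mulr1.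
have AB : A <= B.
  apply: le_trans (lowerA_delta (Ordinal M_gt0)) _.
  by have := besselB _ (delta_inH rs (Ordinal M_gt0)); rewrite hnorm_delta expr1n mulr1.
have AM : A * M%:R <= \sum_j dotp (y j) (y j).
  have -> : \sum_j dotp (y j) (y j) = \sum_(i < M) \sum_j `|dotp (delta_mx 0 i) (y j)| ^+ 2.
    rewrite exchange_big; apply: eq_bigr => j _; apply: eq_bigr => i _.
    by rewrite dotp_delta norm_conjC normCK.
  by rewrite mulr_natr -[in X in X <= _](card_ord M) -sumr_const; exact: ler_sum.
have AC : A <= C / K1 ^+ 2.
  rewrite ler_pdivlMr // mulrC -(ler_pM2r M_pos); apply: le_trans trace_le.
  by rewrite -mulrA; apply: ler_wpM2l; [exact: ltW | exact: AM].
have kappa_ge1 : 1 <= B / A by rewrite ler_pdivlMr // mul1r.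
move=> v v_inH; apply: le_trans (besselB v v_inH) _.
apply: ler_wpM2r; first by rewrite exprn_ge0 ?hnorm_ge0.
apply: le_trans (khintchine_bound_ge K1_gt0 K1_le1 C_gt0 kappa_ge1).
rewrite -[X in X <= _](divfK (lt0r_neq0 A_gt0) B); apply: ler_wpM2l => //.
exact: divr_ge0 (ltW (lt_le_trans A_gt0 AB)) (ltW A_gt0).
Qed.

End FrameBesselBounds.

Theorem theorem4p6 (K : numClosedFieldType) (rs : bool) (K1 C beta : K) (N M : nat)
  (x f : 'I_N -> 'rV[K]_M) :
  0 < K1 -> khintchine_const rs K1 ->
  0 < C -> 0 < beta ->
  (forall j, inH rs (x j)) -> (forall j, inH rs (f j)) ->
  (forall j, hnorm (x j) = hnorm (f j)) ->
  (forall (v : 'rV[K]_M) (eps : 'I_N -> K), inH rs v ->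
     (forall j, is_scalar rs (eps j) /\ `|eps j| = 1) ->
     hnorm (\sum_(j < N) (eps j * dotp v (f j)) *: x j) <= C * hnorm v) ->
  let bnd := 27 / 4 * K1 ^- 4 * beta ^+ 2 * C in
  [/\ (forall lam, eigenvalues_desc (frame_mx f) lam ->
         lam 0%N <= beta / M%:R * \sum_(j < M) lam j -> bessel_bound rs f bnd),
      (condition_number rs f beta -> bessel_bound rs f bnd),
      (tight_frame rs f -> bessel_bound rs f (27 / 4 * K1 ^- 4 * C))
    & (forall lam, eigenvalues_desc (frame_mx x) lam ->
         lam 0%N <= beta / M%:R * \sum_(j < M) lam j -> bessel_bound rs x bnd)].
Proof.
move=> K1_gt0 khin C_gt0 beta_gt0 x_inH f_inH hnorm_xf uncond bnd.
have K1_le1 := khintchine_const_le1 khin.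
have [M0|M_gt0] := posnP M.
  by subst M; split=> *; apply: bessel_bound_dim0.
have trace_f := frame_trace_le K1_gt0 khin x_inH f_inH hnorm_xf uncond.
have trace_x : K1 ^+ 2 * \sum_j dotp (x j) (x j) <= C * M%:R.
  by under eq_bigr => j _ do rewrite -hnorm_sqr hnorm_xf hnorm_sqr.
split.
- by move=> lam; apply: bessel_bound_of_eigenvalues.
- exact: bessel_bound_of_condition_number.
- move/(bessel_bound_of_condition_number M_gt0 K1_gt0 K1_le1 C_gt0 trace_f).
  by rewrite expr1n mulr1.
- by move=> lam; apply: bessel_bound_of_eigenvalues.
Qed.
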